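(* Let $n\ge4$ be even, $1\le i\le n-1$, $y\in Y_i$ and $s\in\{s_1,\dots,s_{n-1}\}$ with $sys\notin Y_i$. (a) If $i=1$ then $s=s_2$. (b) If $2\le i\le n-2$ then $s\in\{s_1,s_i,s_{i+1}\}$. (c) If $i=n-1$ then $s\in\{s_1,s_{n-1}\}$.
   Context: $s_i=(i,i+1)$; permutations compose right to left. $\mathcal F_m$ is the set of fixed-point-free involutions in $S_m$. Regard $\mathcal F_{n-2}\subset S_n$; $w_0$ longest element of $S_n$; $Y_1=\{w_0zs_{n-1}w_0:z\in\mathcal F_{n-2}\}$; $\sigma_i=s_is_{i-1}\cdots s_1$; $Y_i=\sigma_iY_1\sigma_i^{-1}$. *)

From HB Require Import structures.
From mathcomp Require Import all_boot all_fingroup.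
Set Implicit Arguments. Unset Strict Implicit. Unset Printing Implicit Defensive.

(* Permutations of {1,...,n} are modelled as {perm 'I_n}; the paper's point
   k (1 <= k <= n) is the ordinal k-1.  MathComp's product satisfies
   (a * b) x = b (a x), so the paper's right-to-left composition a b
   (apply b first) is [rl a b] := b * a. *)
Local Open Scope group_scope.

Definition rl n (a b : {perm 'I_n}) : {perm 'I_n} := b * a.

(* s_i = (i, i+1) in paper's 1-indexed notation = tperm (i-1) i on 'I_n.
   (Identity when i is out of range; only used for 1 <= i <= n-1.) *)
Definition sgen n (i : nat) : {perm 'I_n} :=
  match insub i.-1 : option 'I_n, insub i : option 'I_n with
  | Some a, Some b => tperm a b
  | _, _ => 1
  end.

Definition w0 n : {perm 'I_n} := perm (@rev_ord_inj n).

(* F_{n-2} regarded in S_n: involutions fixing exactly the points n-1, n *)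
Definition Fset n : {set {perm 'I_n}} :=
  [set z : {perm 'I_n} | (z * z == 1) && [forall x : 'I_n, (z x == x) == (n - 2 <= x)%N]].

Definition Y1 n : {set {perm 'I_n}} :=
  [set rl (w0 n) (rl z (rl (sgen n n.-1) (w0 n))) | z in Fset n].

Fixpoint sigma n (i : nat) : {perm 'I_n} :=
  match i with
  | 0 => 1
  | k.+1 => rl (sgen n k.+1) (sigma n k)
  end.

Definition Y n (i : nat) : {set {perm 'I_n}} :=
  [set rl (sigma n i) (rl y (sigma n i)^-1) | y in Y1 n].

From mathcomp Require Import all_boot all_fingroup zify.
Set Implicit Arguments. Unset Strict Implicit.
Local Open Scope group_scope.

(* Y_1 is the conjugate by w0 of a coset of F_{n-2} by s_{n-1}, where F_{n-2}
   is the set of involutions whose fixed-point set is exactly {n-1, n}.  Every permutation preserving {n-1, n} setwise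
   normalises F_{n-2} and commutes with s_{n-1} = (n-1, n), hence normalises
   the coset.  Since w0 sigma_i maps {n-1, n} onto {1, i+1}, the set Y_i is
   normalised by every permutation preserving {1, i+1}.  The transposition
   s_j = (j, j+1) preserves {1, i+1} unless exactly one of j, j+1 lies in it,
   so s_j y s_j leaves Y_i only if j is 1, i or i+1, and not j = i = 1. *)

Section PermutationSets.
Variable T : finType.

Definition involutions_with_fixset (S : {set T}) : {set {perm T}} :=
  [set z : {perm T} | (z * z == 1) && [forall x, (z x == x) == (x \in S)]].

Lemma norms_by_conjg (A B : {set {perm T}}) :
  (forall p z, p \in A -> z \in B -> z ^ p \in B) -> A \subset 'N(B).
Proof.
move=> closedB; apply/subsetP=> p Ap; rewrite inE; apply/subsetP=> y.
by rewrite mem_conjg => /(closedB p _ Ap); rewrite conjgKV.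
Qed.

Lemma tperm_astabs (S : {set T}) (a b : T) :
  (a \in S) = (b \in S) -> tperm a b \in 'N(S | 'P).
Proof.
move=> eab; apply/astabsP=> x /=; rewrite apermE.
by case: tpermP => [->|->|] //; rewrite eab.
Qed.

Lemma astabs_permJ (S : {set T}) (g : {perm T}) :
  'N(S | 'P) :^ g = 'N(g @: S | 'P).
Proof.
apply/setP=> p; rewrite mem_conjg.
have pgE u : p (g u) = g ((p ^ g^-1) u).
  by rewrite -[u in RHS](permK g) permJ permKV.
have memgS u : (g u \in g @: S) = (u \in S) by rewrite mem_imset //; exact: perm_inj.
apply/astabsP/astabsP=> nS x /=; rewrite apermE.
  by rewrite -(permKV g x) pgE !memgS; exact: nS.
by rewrite -!memgS -pgE; exact: nS.
Qed.

Lemma astabs_sub_cent_tperm (a b : T) : 'N([set a; b] | 'P) \subset 'C[tperm a b].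
Proof.
apply/subsetP=> p /astabsP nab; apply/cent1P/commute_sym/commgP.
rewrite -conjg_fix tpermJ.
have := nab a; have := nab b; rewrite /= !apermE !inE !eqxx orbT.
have degenerate : p a = p b -> a = b by exact: perm_inj.
case/orP=> /eqP pb /orP[] /eqP pa; rewrite pa pb //.
- by rewrite (degenerate (etrans pa (esym pb))).
- by rewrite tpermC.
- by rewrite (degenerate (etrans pa (esym pb))).
Qed.

Lemma norms_involutions_with_fixset (S : {set T}) :
  'N(S | 'P) \subset 'N(involutions_with_fixset S).
Proof.
apply: norms_by_conjg => p z /astabsP nS.
rewrite !inE => /andP[/eqP zz /forallP fixz]; apply/andP; split.
  by rewrite -conjMg zz conj1g.
apply/forallP=> x; rewrite -(permKV p x) permJ (inj_eq perm_inj) (eqP (fixz _)).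
by have := nS (p^-1 x); rewrite /= apermE => ->.
Qed.

Lemma astabs_norms_tperm_lcoset (a b : T) :
  'N([set a; b] | 'P) \subset 'N(tperm a b *: involutions_with_fixset [set a; b]).
Proof.
apply: normsM; last exact: norms_involutions_with_fixset.
by apply: cents_norm; rewrite cent_set1; exact: astabs_sub_cent_tperm.
Qed.

End PermutationSets.

Section SymmetricGroup.
Variable n : nat.

Lemma sgen_tperm k (a b : 'I_n) :
  a = k.-1 :> nat -> b = k :> nat -> sgen n k = tperm a b.
Proof.
move=> ak bk; rewrite /sgen.
have -> : insub k.-1 = Some a by rewrite -ak valK.
by have -> : insub k = Some b by rewrite -bk valK.
Qed.

Lemma sgen_id k (x : 'I_n) : (x.+1 < k)%N -> sgen n k x = x.
Proof.
move=> xk; rewrite /sgen.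
case: (insubP 'I_n k.-1) => [a _ ak|_]; case: (insubP 'I_n k) => [b _ bk|_];
  rewrite ?perm1 //.
move: ak bk => /= ak bk.
by apply: tpermD; apply/eqP=> /(congr1 val) /=; lia.
Qed.

Lemma sigma_ord0 k (x u : 'I_n) : x = 0%N :> nat -> u = k :> nat -> sigma n k x = u.
Proof.
move=> x0; elim: k u => [|k IHk] u uk /=.
  by rewrite perm1; apply: val_inj; rewrite /= x0 uk.
have k_lt_n : (k < n)%N by rewrite -uk; exact: ltnW (ltn_ord u).
rewrite /rl permM (IHk (Ordinal k_lt_n)) // (@sgen_tperm k.+1 (Ordinal k_lt_n) u) //.
exact: tpermL.
Qed.

Lemma sigma_ord1 k (x u : 'I_n) :
  (0 < k)%N -> x = 1%N :> nat -> u = 0%N :> nat -> sigma n k x = u.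
Proof.
move=> + x1 u0; elim: k => [|k IHk] // _ /=; rewrite /rl permM.
case: k IHk => [|k] IHk; last by rewrite IHk // sgen_id // u0.
by rewrite perm1 (@sgen_tperm 1 u x) ?u0 ?x1 //; exact: tpermR.
Qed.

Lemma w0K : involutive (w0 n).
Proof. by move=> x; rewrite /w0 !permE rev_ordK. Qed.

Lemma w0V : (w0 n)^-1 = w0 n.
Proof. by apply/permP=> x; rewrite -[in LHS](w0K x) permK. Qed.

Lemma w0_ord (x u : 'I_n) : (x + u = n.-1)%N -> w0 n x = u.
Proof. by move=> xu; apply: val_inj; rewrite /w0 permE /=; lia. Qed.

Lemma Y1E : Y1 n = (sgen n n.-1 *: Fset n) :^ w0 n.
Proof.
rewrite /Y1 /conjugate -lcosetE /lcoset -imset_comp.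
by apply: eq_imset => z; rewrite /= /rl conjgE w0V !mulgA.
Qed.

Lemma YE i : Y n i = Y1 n :^ sigma n i.
Proof. by apply: eq_imset => y; rewrite /rl conjgE mulgA. Qed.

Lemma FsetE (a b : 'I_n) :
  a = n.-2 :> nat -> b = n.-1 :> nat -> Fset n = involutions_with_fixset [set a; b].
Proof.
move=> /= an bn; apply/setP=> z; rewrite !inE; congr (_ && _).
apply: eq_forallb => x; rewrite !inE; congr (_ == _).
by rewrite -!val_eqE /= an bn; have := ltn_ord x; lia.
Qed.

Lemma astabs_norms_Y i (x0 xi : 'I_n) :
  (0 < i)%N -> x0 = 0%N :> nat -> xi = i :> nat ->
  'N([set x0; xi] | 'P) \subset 'N(Y n i).
Proof.
move=> i_gt0 x0E xiE; have := ltn_ord xi; rewrite xiE => i_lt_n.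
have [a aE] : exists a : 'I_n, a = n.-2 :> nat by exists (@Ordinal n n.-2 ltac:(lia)).
have [b bE] : exists b : 'I_n, b = n.-1 :> nat by exists (@Ordinal n n.-1 ltac:(lia)).
have [x1 x1E] : exists x1 : 'I_n, x1 = 1%N :> nat by exists (@Ordinal n 1 ltac:(lia)).
have abE : (w0 n * sigma n i) @: [set a; b] = [set x0; xi].
  rewrite imsetU1 imset_set1 !permM (@w0_ord a x1) ?(@w0_ord b x0); try lia.
  by rewrite (sigma_ord1 (u := x0)) // (sigma_ord0 (u := xi)).
rewrite YE Y1E (FsetE aE bE) (sgen_tperm aE bE).
rewrite -conjsgM normJ -abE -astabs_permJ conjSg.
exact: astabs_norms_tperm_lcoset.
Qed.

End SymmetricGroup.

Theorem proposition3p8 (n : nat) (hn : (4 <= n)%N) (hev : ~~ odd n)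
  (i : nat) (hi : (1 <= i <= n - 1)%N)
  (y : {perm 'I_n}) (hy : y \in Y n i)
  (j : nat) (hj : (1 <= j <= n - 1)%N)
  (hs : rl (sgen n j) (rl y (sgen n j)) \notin Y n i) :
  [/\ i = 1%N -> sgen n j = sgen n 2,
      (2 <= i <= n - 2)%N ->
        sgen n j \in [:: sgen n 1; sgen n i; sgen n i.+1]
    & i = (n - 1)%N -> sgen n j \in [:: sgen n 1; sgen n (n - 1)]].
Proof.
have [a aE] : exists a : 'I_n, a = j.-1 :> nat by exists (@Ordinal n j.-1 ltac:(lia)).
have [b bE] : exists b : 'I_n, b = j :> nat by exists (@Ordinal n j ltac:(lia)).
have [x0 x0E] : exists x0 : 'I_n, x0 = 0%N :> nat by exists (@Ordinal n 0 ltac:(lia)).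
have [xi xiE] : exists xi : 'I_n, xi = i :> nat by exists (@Ordinal n i ltac:(lia)).
have i_gt0 : (0 < i)%N by lia.
have admissible : (a \in [set x0; xi]) != (b \in [set x0; xi]).
  apply: contra hs => /eqP /tperm_astabs sN.
  rewrite /rl (sgen_tperm aE bE) -{1}tpermV -mulgA -conjgE memJ_norm //.
  exact: subsetP (astabs_norms_Y i_gt0 x0E xiE) _ sN.
rewrite !inE -!val_eqE /= aE bE x0E xiE in admissible.
split=> [i1 | _ | iE]; rewrite ?inE.
- by have -> : j = 2 by lia.
- have : [|| j == 1, j == i | j == i.+1]%N by lia.
  by case/or3P=> /eqP ->; rewrite eqxx ?orbT.
- have : ((j == 1) || (j == n - 1))%N by lia.
  by case/orP=> /eqP ->; rewrite eqxx ?orbT.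
Qed.
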